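(* Let $(\mathcal{S},\mathcal{A},\tau,\mu_0,\gamma)$ be fixed and $\beta>0$. For a reward function $R$, let $\preceq^{\zeta}_{\beta,R}$ denote the family of probabilities $\mathbb{P}_R(\zeta_1\preceq\zeta_2)=\exp(\beta G_R(\zeta_2))/(\exp(\beta G_R(\zeta_1))+\exp(\beta G_R(\zeta_2)))$ indexed by all pairs $(\zeta_1,\zeta_2)$ of possible trajectory fragments (of any lengths $\ge0$). Then for reward functions $R,R'$: $\preceq^{\zeta}_{\beta,R}=\preceq^{\zeta}_{\beta,R'}$ if and only if $R'$ is produced from $R$ by a mask of impossible transitions, i.e. $R(x)=R'(x)$ for all possible transitions $x$.
   Context: An MDP is $(\mathcal{S},\mathcal{A},\tau,\mu_0,R,\gamma)$ with finite $\mathcal{S},\mathcal{A}$, $\tau:\mathcal{S}\times\mathcal{A}\to\Delta(\mathcal{S})$, $\mu_0\in\Delta(\mathcal{S})$, $R:\mathcal{S}\times\mathcal{A}\times\mathcal{S}\to\mathbb{R}$, $\gamma\in(0,1)$. A transition $(s,a,s')$ is possible if $\tau(s'\mid s,a)>0$, impossible otherwise. A trajectory fragment of length $n$ is $(s_0,a_0,s_1,\dots,a_{n-1},s_n)$, possible if all its transitions are possible, with return $G(\zeta)=\sum_{t=0}^{n-1}\gamma^tR(s_t,a_t,s_{t+1})$. *)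

From HB Require Import structures.
From mathcomp Require Import all_boot all_order all_algebra.
From mathcomp Require Import all_classical all_reals all_analysis.
Set Implicit Arguments. Unset Strict Implicit. Unset Printing Implicit Defensive.
Import Order.TTheory GRing.Theory Num.Theory.
Local Open Scope ring_scope.

Section MDP.
Variables (R : realType) (S A : finType).

Definition is_transition (tau : S -> A -> S -> R) : Prop :=
  forall s a, (forall s', 0 <= tau s a s') /\ \sum_(s' : S) tau s a s' = 1.

Definition is_distribution (mu : S -> R) : Prop :=
  (forall s, 0 <= mu s) /\ \sum_(s : S) mu s = 1.

(* A trajectory fragment (s_0, a_0, s_1, ..., a_{n-1}, s_n) is represented as
   a start state s_0 together with the list [:: (a_0,s_1); ...; (a_{n-1},s_n)]. *)
Record fragment := Fragment { frag_start : S; frag_steps : seq (A * S) }.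

Definition possible_transition (tau : S -> A -> S -> R) (s : S) (a : A) (s' : S) : Prop :=
  0 < tau s a s'.

Fixpoint possible_steps (tau : S -> A -> S -> R) (s : S) (l : seq (A * S)) : Prop :=
  match l with
  | [::] => True
  | (a, s') :: l' => possible_transition tau s a s' /\ possible_steps tau s' l'
  end.

Definition possible_fragment tau (z : fragment) : Prop :=
  possible_steps tau (frag_start z) (frag_steps z).

(* G(zeta) = sum_{t=0}^{n-1} gamma^t Rw(s_t, a_t, s_{t+1}) *)
Fixpoint steps_return (gamma : R) (Rw : S -> A -> S -> R) (s : S) (l : seq (A * S)) : R :=
  match l with
  | [::] => 0
  | (a, s') :: l' => Rw s a s' + gamma * steps_return gamma Rw s' l'
  end.

Definition frag_return gamma Rw (z : fragment) : R :=
  steps_return gamma Rw (frag_start z) (frag_steps z).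

Definition pref_prob (beta gamma : R) (Rw : S -> A -> S -> R) (z1 z2 : fragment) : R :=
  expR (beta * frag_return gamma Rw z2) /
  (expR (beta * frag_return gamma Rw z1) + expR (beta * frag_return gamma Rw z2)).

End MDP.

From HB Require Import structures.
From mathcomp Require Import all_boot all_order all_algebra.
From mathcomp Require Import all_classical all_reals all_analysis.
Set Implicit Arguments. Unset Strict Implicit. Unset Printing Implicit Defensive.
Import Order.TTheory GRing.Theory Num.Theory.
Local Open Scope ring_scope.

(* Returns of possible fragments only read rewards of possible transitions,
   which gives one direction.  Conversely, comparing the empty fragment at s
   (return 0) with the one-step fragment (s, a, s') yields the probability
   e / (1 + e) with e = exp (beta R(s,a,s')); this logistic expression is
   injective, exp is injective and beta <> 0, so R and R' agree on (s,a,s'). *)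

Section Returns.
Variables (R : realType) (S A : finType) (tau : S -> A -> S -> R) (gamma : R).

Lemma eq_steps_return_possible (Rw Rw' : S -> A -> S -> R) :
  (forall s a s', possible_transition tau s a s' -> Rw s a s' = Rw' s a s') ->
  forall s l, possible_steps tau s l ->
  steps_return gamma Rw s l = steps_return gamma Rw' s l.
Proof.
move=> eqRw s l; elim: l s => [|[a s'] l IHl] s //= [tr_s l_s'].
by rewrite eqRw // IHl.
Qed.

Lemma eq_frag_return_possible (Rw Rw' : S -> A -> S -> R) (z : fragment S A) :
  (forall s a s', possible_transition tau s a s' -> Rw s a s' = Rw' s a s') ->
  possible_fragment tau z ->
  frag_return gamma Rw z = frag_return gamma Rw' z.
Proof. by move=> eqRw; apply: eq_steps_return_possible. Qed.

Lemma frag_return_nil (Rw : S -> A -> S -> R) (s : S) :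
  frag_return gamma Rw (Fragment s [::]) = 0.
Proof. by []. Qed.

Lemma frag_return_step (Rw : S -> A -> S -> R) (s : S) (a : A) (s' : S) :
  frag_return gamma Rw (Fragment s [:: (a, s')]) = Rw s a s'.
Proof. by rewrite /frag_return /= mulr0 addr0. Qed.

End Returns.

Lemma logistic_inj (R : numFieldType) :
  {in Num.pos &, injective (fun u : R => u / (1 + u))}.
Proof.
move=> u v; rewrite !posrE => u_gt0 v_gt0 eq_uv.
have Du : 1 + u != 0 by rewrite gt_eqF // ltr_wpDr // ltW.
have Dv : 1 + v != 0 by rewrite gt_eqF // ltr_wpDr // ltW.
move/(congr1 (fun x => x * (1 + u) * (1 + v))): eq_uv.
rewrite divfK // mulrAC divfK // !mulrDr !mulr1 (mulrC v u).
exact: addIr.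
Qed.

Lemma pref_prob_nil_l (R : realType) (S A : finType) (beta gamma : R)
    (Rw : S -> A -> S -> R) (s : S) (z : fragment S A) :
  pref_prob beta gamma Rw (Fragment s [::]) z =
  expR (beta * frag_return gamma Rw z) / (1 + expR (beta * frag_return gamma Rw z)).
Proof. by rewrite /pref_prob frag_return_nil mulr0 expR0. Qed.

Theorem theorem3p11 (R : realType) (S A : finType)
    (tau : S -> A -> S -> R) (mu0 : S -> R) (gamma beta : R)
    (Htau : is_transition tau) (Hmu0 : is_distribution mu0)
    (Hgamma : 0 < gamma < 1) (Hbeta : 0 < beta)
    (Rw Rw' : S -> A -> S -> R) :
  (forall z1 z2 : fragment S A,
      possible_fragment tau z1 -> possible_fragment tau z2 ->
      pref_prob beta gamma Rw z1 z2 = pref_prob beta gamma Rw' z1 z2)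
  <->
  (forall s a s', possible_transition tau s a s' -> Rw s a s' = Rw' s a s').
Proof.
split=> [eq_pref s a s' tr_s | eqRw z1 z2 z1_poss z2_poss].
- have := eq_pref (Fragment s [::]) (Fragment s [:: (a, s')]) I (conj tr_s I).
  rewrite !pref_prob_nil_l !frag_return_step.
  move/logistic_inj; rewrite !posrE !expR_gt0 => /(_ isT isT) /expR_inj.
  by apply: mulfI; rewrite gt_eqF.
- by rewrite /pref_prob (eq_frag_return_possible gamma eqRw z1_poss)
    (eq_frag_return_possible gamma eqRw z2_poss).
Qed.
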